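(* Let $\delta>0$. In the multidimensional knapsack problem, if $q_{\max}:=\max_{i,j}w_{ij}/B_j\le\delta/m$, then the deterministic rounding algorithm returns an integral allocation $x$ satisfying $\sum_ix_iv_i\ge(1-\delta)\sum_ix_i^*v_i$ (and $\sum_iw_{ij}x_i\le B_j$ for all $j$).
   Context: Multidimensional knapsack: a finite set of items $i$, each with value $v_i\ge0$ and weight vector $(w_{i1},\dots,w_{im})\in\mathbb{R}_+^m$, and capacities $B_1,\dots,B_m>0$. The LP relaxation maximizes $\sum_iv_ix_i$ subject to $0\le x_i\le1$ for all $i$ and $\sum_iw_{ij}x_i\le B_j$ for all $j$. Deterministic rounding algorithm: compute a basic (vertex) optimal solution $x^*$ of this LP, and output $x_i=1$ if $x_i^*=1$ and $x_i=0$ otherwise. *)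

From mathcomp Require Import all_boot all_order all_algebra.
Set Implicit Arguments. Unset Strict Implicit. Unset Printing Implicit Defensive.
Import Order.TTheory GRing.Theory Num.Theory.
Local Open Scope ring_scope.

Definition lp_feasible (R : realFieldType) (n m : nat)
  (w : 'I_n -> 'I_m -> R) (B : 'I_m -> R) (x : 'I_n -> R) : Prop :=
  (forall i, 0 <= x i <= 1) /\ (forall j, \sum_(i < n) w i j * x i <= B j).

Definition lp_value (R : realFieldType) (n : nat) (v : 'I_n -> R) (x : 'I_n -> R) : R :=
  \sum_(i < n) v i * x i.

Definition lp_optimal (R : realFieldType) (n m : nat) (v : 'I_n -> R)
  (w : 'I_n -> 'I_m -> R) (B : 'I_m -> R) (x : 'I_n -> R) : Prop :=
  lp_feasible w B x /\
  forall y, lp_feasible w B y -> lp_value v y <= lp_value v x.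

(* x is a vertex (extreme point, equivalently basic feasible solution) of the
   LP feasible polytope: it is not the midpoint of two distinct feasible points. *)
Definition lp_vertex (R : realFieldType) (n m : nat)
  (w : 'I_n -> 'I_m -> R) (B : 'I_m -> R) (x : 'I_n -> R) : Prop :=
  lp_feasible w B x /\
  forall y z, lp_feasible w B y -> lp_feasible w B z ->
    (forall i, x i = (y i + z i) / 2%:R) -> y = z.

Definition round01 (R : realFieldType) (n : nat) (xs : 'I_n -> R) : 'I_n -> R :=
  fun i => if xs i == 1 then 1 else 0.

From mathcomp Require Import all_boot all_order all_algebra.
From mathcomp Require Import lra.
Import Order.TTheory GRing.Theory Num.Theory.
Local Open Scope ring_scope.

(* A vertex x* of the LP polytope has at most m fractional coordinates: with
   more, some nonzero direction d supported on the fractional items satisfies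
   all m capacity constraints with equality, and x* is the midpoint of the
   feasible points x* + e d and x* - e d for small e > 0.  By optimality, an
   item f with x*_f < 1 is worth at most q OPT, where w_ij <= q B_j: scaling x*
   by 1 - q s and adding s to coordinate f stays feasible, and loses q s OPT
   while gaining s v_f.  Rounding only drops the at most m fractional items,
   hence loses at most m q OPT = delta OPT. *)

Lemma exists_nonzero_left_kernel {F : fieldType} {k m : nat}
    (A : 'M[F]_(k, m)) :
  (m < k)%N -> exists2 u : 'rV_k, u != 0 & u *m A = 0.
Proof.
move=> mk; have /rowV0Pn[u /sub_kermxP uA u0] : kermx A != 0.
  rewrite kermx_eq0; apply: contraL mk => /eqP <-.
  by rewrite -leqNgt rank_leq_col.
by exists u.
Qed.

Lemma exists_pos_lbound {R : realFieldType} {I : finType} (P : pred I)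
    (f : I -> R) :
  (forall i, P i -> 0 < f i) ->
  exists2 e : R, 0 < e & forall i, P i -> e <= f i.
Proof.
move=> f_gt0; pose S := \sum_(i | P i) (f i)^-1.
have S_ge0 : 0 <= S by apply: sumr_ge0 => i /f_gt0; rewrite invr_ge0 => /ltW.
exists (1 + S)^-1 => [|i Pi]; first by rewrite invr_gt0; lra.
have fi_gt0 := f_gt0 i Pi.
have fVi_le : (f i)^-1 <= S.
  rewrite /S (bigD1 i) //= lerDl; apply: sumr_ge0 => j /andP[/f_gt0 + _].
  by rewrite invr_ge0 => /ltW.
rewrite -div1r ler_pdivrMr; last lra.
apply: le_trans (ler_wpM2l (ltW fi_gt0) (_ : (f i)^-1 <= 1 + S)); last lra.
by rewrite mulfV ?gt_eqF.
Qed.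

Definition frac_support {R : realFieldType} {n : nat} (x : 'I_n -> R) :
  {set 'I_n} := [set i | 0 < x i < 1].

Section Knapsack.

Context {R : realFieldType} {n m : nat}.
Context {w : 'I_n -> 'I_m -> R} {B : 'I_m -> R}.

Lemma exists_null_direction (F : {set 'I_n}) : (m < #|F|)%N ->
  exists d : 'I_n -> R, [/\ exists i, d i != 0, forall i, d i != 0 -> i \in F
    & forall j, \sum_i w i j * d i = 0].
Proof.
move=> mF.
(* [P] embeds 'I_#|F| onto [F], so the left kernel of [P *m W] pushed forward
   by [P] consists of null directions supported on [F]. *)
pose P : 'M[R]_(#|F|, n) := \matrix_(a, i) (enum_val a == i)%:R.
pose W : 'M[R]_(n, m) := \matrix_(i, j) w i j.
have [u u0 uPW] := exists_nonzero_left_kernel (P *m W) mF.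
have uP_enum a : (u *m P) 0 (enum_val a) = u 0 a.
  rewrite mxE (bigD1 a) //= mxE eqxx mulr1 big1 ?addr0 // => b ba.
  by rewrite mxE (inj_eq enum_val_inj) (negPf ba) mulr0.
exists (fun i => (u *m P) 0 i); split.
- have [a ua] : exists a, u 0 a != 0.
    apply/existsP; apply: contraNT u0 => /existsPn u_eq0.
    by apply/eqP/rowP => a; rewrite mxE; apply/eqP/negbNE/u_eq0.
  by exists (enum_val a); rewrite uP_enum.
- move=> i; apply: contraR => iF; rewrite mxE big1 // => a _; rewrite mxE.
  by case: eqP => [ai|_]; [move: iF; rewrite -ai enum_valP | rewrite mulr0].
- move=> j; have /matrixP/(_ 0 j) := uPW; rewrite mulmxA mxE [RHS]mxE => uPWj.
  by rewrite -[RHS]uPWj; apply: eq_bigr => i _; rewrite [W _ _]mxE mulrC.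
Qed.

Lemma lp_feasible_shift {x d : 'I_n -> R} : lp_feasible w B x ->
  (forall j, \sum_i w i j * d i = 0) ->
  (forall i, `|d i| <= Num.min (x i) (1 - x i)) ->
  lp_feasible w B (fun i => x i + d i).
Proof.
move=> [_ xB] wd0 d_le; split=> [i|j].
  by have := d_le i; rewrite le_min !ler_norml => /andP[]; lra.
under eq_bigr do rewrite mulrDr; rewrite big_split /= wd0 addr0; exact: xB.
Qed.

Lemma lp_vertex_null_direction {x d : 'I_n -> R} : lp_vertex w B x ->
  (forall j, \sum_i w i j * d i = 0) -> (forall i, d i != 0 -> 0 < x i < 1) ->
  forall i, d i = 0.
Proof.
move=> [xF xV] wd0 d_frac.
have ratio_gt0 i : d i != 0 -> 0 < Num.min (x i) (1 - x i) / `|d i|.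
  move=> di; have /andP[xi_gt0 xi_lt1] := d_frac i di.
  by rewrite divr_gt0 ?normr_gt0 // lt_min; apply/andP; split; lra.
have [e e_gt0 e_le] := exists_pos_lbound _ _ ratio_gt0.
have ed_le i : `|e * d i| <= Num.min (x i) (1 - x i).
  have [->|di] := eqVneq (d i) 0.
    by rewrite mulr0 normr0 le_min; have /andP[] := xF.1 i; lra.
  by rewrite normrM gtr0_norm // -ler_pdivlMr ?normr_gt0 //; apply: e_le.
have wde c j : \sum_i w i j * (c * d i) = 0.
  by under eq_bigr do rewrite mulrCA; rewrite -mulr_sumr wd0 mulr0.
have feas_pos := lp_feasible_shift xF (wde e) ed_le.
have feas_neg : lp_feasible w B (fun i => x i + - e * d i).
  by apply: lp_feasible_shift (wde (- e)) _ => // i; rewrite mulNr normrN.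
have mid k : x k = (x k + e * d k + (x k + - e * d k)) / 2%:R.
  by rewrite mulNr; lra.
move=> i; have /= := congr1 (fun y => y i) (xV _ _ feas_pos feas_neg mid).
rewrite mulNr => shift_eq; have /eqP : e * d i = 0 by lra.
by rewrite mulf_eq0 gt_eqF // => /eqP.
Qed.

Lemma lp_vertex_frac_support_card {x : 'I_n -> R} :
  lp_vertex w B x -> (#|frac_support x| <= m)%N.
Proof.
move=> xV; rewrite leqNgt; apply/negP.
move=> /exists_null_direction[d [[i di] dF wd0]].
move: di; rewrite (lp_vertex_null_direction xV wd0) ?eqxx // => k /dF.
by rewrite inE.
Qed.

Lemma sum_mul_scale_add_delta (a x : 'I_n -> R) (c s : R) (f : 'I_n) :
  \sum_i a i * (c * x i + s * (i == f)%:R) = c * \sum_i a i * x i + s * a f.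
Proof.
under eq_bigr do rewrite mulrDr mulrCA [a _ * (s * _)]mulrCA.
rewrite big_split /= -!mulr_sumr; congr (_ + s * _).
rewrite (bigD1 f) //= eqxx mulr1 big1 ?addr0 //.
by move=> i /negPf ->; rewrite mulr0.
Qed.

Lemma lp_feasible_toward_item {q s : R} {x : 'I_n -> R} {f : 'I_n} :
  0 <= q -> 0 <= s -> q * s <= 1 -> s <= 1 - x f ->
  (forall j, w f j <= q * B j) -> lp_feasible w B x ->
  lp_feasible w B (fun i => (1 - q * s) * x i + s * (i == f)%:R).
Proof.
move=> q_ge0 s_ge0 qs_le1 s_le wf [x01 xB]; have qs_ge0 := mulr_ge0 q_ge0 s_ge0.
split=> [i|j].
  have := x01 i; case: eqP => [->|_] /andP[xi_ge0 xi_le1];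
    by rewrite ?mulr1 ?mulr0; apply/andP; split; nra.
by rewrite sum_mul_scale_add_delta; have := xB j; have := wf j; nra.
Qed.

Lemma lp_optimal_item_value_le {v x : 'I_n -> R} {q : R} {f : 'I_n} :
  0 <= q -> (forall j, w f j <= q * B j) -> lp_optimal v w B x -> x f < 1 ->
  v f <= q * lp_value v x.
Proof.
move=> q_ge0 wf [xF x_opt] xf_lt1; have /andP[xf_ge0 _] := xF.1 f.
pose s := (1 - x f) / (1 + q).
have s_gt0 : 0 < s by apply: divr_gt0; lra.
have qs_le1 : q * s <= 1 by rewrite mulrA ler_pdivrMr; nra.
have s_le : s <= 1 - x f by rewrite ler_pdivrMr; nra.
have := x_opt _ (lp_feasible_toward_item q_ge0 (ltW s_gt0) qs_le1 s_le wf xF).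
rewrite /lp_value sum_mul_scale_add_delta => opt.
by rewrite -(ler_pM2l s_gt0); nra.
Qed.

Lemma round01_le (x : 'I_n -> R) (i : 'I_n) : 0 <= x i -> round01 x i <= x i.
Proof. by rewrite /round01; case: eqP => [->|]. Qed.

Lemma lp_constraint_round01 {x : 'I_n -> R} :
  (forall i j, 0 <= w i j) -> lp_feasible w B x ->
  forall j, \sum_i w i j * round01 x i <= B j.
Proof.
move=> w_ge0 [x01 xB] j; apply: le_trans (xB j); apply: ler_sum => i _.
by rewrite ler_wpM2l // round01_le //; case/andP: (x01 i).
Qed.

Lemma lp_value_sub_round01 (v : 'I_n -> R) {x : 'I_n -> R} :
  (forall i, 0 <= x i <= 1) ->
  lp_value v x - lp_value v (round01 x) = \sum_(i in frac_support x) v i * x i.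
Proof.
move=> x01; rewrite /lp_value -sumrB [RHS]big_mkcond; apply: eq_bigr => i _.
rewrite /round01 inE; have /andP[xi_ge0 xi_le1] := x01 i.
have [->|xi_neq1] := eqVneq (x i) 1; first by rewrite ltxx andbF subrr.
rewrite mulr0 subr0 lt_def xi_ge0 andbT lt_neqAle xi_neq1 xi_le1 /=.
by case: eqP => [->|]; rewrite ?mulr0.
Qed.

End Knapsack.

Theorem lemma4 (R : realFieldType) (n m : nat)
  (v : 'I_n -> R) (w : 'I_n -> 'I_m -> R) (B : 'I_m -> R) (delta : R)
  (xs : 'I_n -> R) :
  0 < delta ->
  (forall i, 0 <= v i) ->
  (forall i j, 0 <= w i j) ->
  (forall j, 0 < B j) ->
  (forall i j, w i j / B j <= delta / m%:R) ->
  lp_optimal v w B xs ->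
  lp_vertex w B xs ->
  lp_value v (round01 xs) >= (1 - delta) * lp_value v xs /\
  (forall j, \sum_(i < n) w i j * round01 xs i <= B j).
Proof.
move=> delta_gt0 v_ge0 w_ge0 B_gt0 wB_le xs_opt xs_vertex.
have [[xs01 _] _] := xs_opt; split; last exact: lp_constraint_round01 xs_opt.1.
set q := delta / m%:R; set OPT := lp_value v xs; set F := frac_support xs.
have q_ge0 : 0 <= q by rewrite divr_ge0 ?ler0n ?ltW.
have w_le i j : w i j <= q * B j by rewrite -ler_pdivrMr ?wB_le.
have OPT_ge0 : 0 <= OPT.
  by apply: sumr_ge0 => i _; rewrite mulr_ge0 //; case/andP: (xs01 i).
have item_le i : i \in F -> v i * xs i <= q * OPT.
  rewrite inE => /andP[xi_gt0 xi_lt1].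
  apply: le_trans (lp_optimal_item_value_le q_ge0 (w_le i) xs_opt xi_lt1).
  by rewrite ler_piMr // ltW.
have loss_le : \sum_(i in F) v i * xs i <= #|F|%:R * (q * OPT).
  by rewrite mulr_natl -sumr_const; apply: ler_sum.
have card_le : #|F|%:R * (q * OPT) <= m%:R * (q * OPT).
  apply: ler_wpM2r; first exact: mulr_ge0.
  by rewrite ler_nat (lp_vertex_frac_support_card xs_vertex).
have mq_le : m%:R * q <= delta.
  have [->|m_neq0] := eqVneq m 0%N; first by rewrite mul0r ltW.
  by rewrite mulrCA divff ?mulr1 ?pnatr_eq0.
have := lp_value_sub_round01 v xs01; rewrite -/OPT -/F; nra.
Qed.
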